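(* For each $n\ge1$ let $x_1,\dots,x_n\in\mathbb{R}^p$, induced points $u_1,\dots,u_s$ chosen from them, $\epsilon>0$ and a cutoff $\eta_{1,n}>0$, and define $\bar K,\bar Z,\bar\Lambda,\tilde K,\tilde Z,\tilde\Lambda$ as in the context. Suppose there is a constant $c_1\in(0,1)$ such that $\bar K_{i\cdot},\bar K_{\cdot i},\tilde K_{i\cdot},\tilde K_{\cdot i}\ge c_1n$ for all $1\le i\le n$ and all $n\ge1$. Then there exists a constant $C_1$ such that $$\|\bar Z\bar\Lambda^{-1}\bar Z^\top-\tilde Z\tilde\Lambda^{-1}\tilde Z^\top\|_2\le C_1\big(\exp(-\eta_{1,n}^2/(4\epsilon^2))+\eta_{2,n}/\epsilon\big),$$ where $\eta_{2,n}=\sup_{1\le i\le n}\|x_i-u_{\tau(i)}\|$.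
   Context: $\|\cdot\|_2$ is the spectral norm; $B_{i\cdot}=\sum_jB_{ij}$, $B_{\cdot j}=\sum_iB_{ij}$. Let $k(x,x')=\exp(-\|x-x'\|^2/(4\epsilon^2))$ and $k_{\eta_{1,n}}(x,x')=k(x,x')\mathbf 1_{\{\|x-x'\|<\eta_{1,n}\}}$. One-step: $\bar K_{ij}=k(x_i,x_j)$, $\bar A_{ij}=k(x_i,x_j)/(\bar K_{i\cdot}\bar K_{\cdot j})$, $\bar Z_{ij}=\bar A_{ij}/\bar A_{i\cdot}$, $\bar\Lambda=\mathrm{diag}(\bar Z_{\cdot i})$. For each $i$, $u_{\tau(i)}$ is the induced point nearest to $x_i$. $\tilde K_{ij}=k_{\eta_{1,n}}(x_i,u_{\tau(j)})$, $\tilde A_{ij}=\tilde K_{ij}/(\tilde K_{i\cdot}\tilde K_{\cdot j})$, $\tilde Z_{ij}=\tilde A_{ij}/\tilde A_{i\cdot}$, $\tilde\Lambda=\mathrm{diag}(\tilde Z_{\cdot i})$, all for $1\le i,j\le n$. *)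

From HB Require Import structures.
From mathcomp Require Import all_boot all_order all_algebra.
From mathcomp Require Import all_classical all_reals all_analysis.
Set Implicit Arguments. Unset Strict Implicit. Unset Printing Implicit Defensive.
Import Order.TTheory GRing.Theory Num.Theory.
Local Open Scope ring_scope.
Local Open Scope classical_set_scope.

Section Defs.
Variable R : realType.

Definition eucl_dist (p : nat) (x y : 'rV[R]_p) : R :=
  Num.sqrt (\sum_(k < p) (x 0 k - y 0 k) ^+ 2).

Definition gkern (eps : R) (p : nat) (x y : 'rV[R]_p) : R :=
  expR (- (eucl_dist x y) ^+ 2 / (4 * eps ^+ 2)).

Definition gkern_trunc (eps eta : R) (p : nat) (x y : 'rV[R]_p) : R :=
  if eucl_dist x y < eta then gkern eps x y else 0.

Definition rsum (n : nat) (B : 'M[R]_n) (i : 'I_n) : R := \sum_(j < n) B i j.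
Definition csum (n : nat) (B : 'M[R]_n) (j : 'I_n) : R := \sum_(i < n) B i j.

Definition Amat (n : nat) (K : 'M[R]_n) : 'M[R]_n :=
  \matrix_(i, j) (K i j / (rsum K i * csum K j)).
Definition Zmat (n : nat) (K : 'M[R]_n) : 'M[R]_n :=
  \matrix_(i, j) (Amat K i j / rsum (Amat K) i).
Definition Lmat (n : nat) (K : 'M[R]_n) : 'M[R]_n :=
  diag_mx (\row_i csum (Zmat K) i).
Definition ZLZ (n : nat) (K : 'M[R]_n) : 'M[R]_n :=
  Zmat K *m invmx (Lmat K) *m (Zmat K)^T.

Definition vnorm (n : nat) (v : 'cV[R]_n) : R :=
  Num.sqrt (\sum_(i < n) (v i 0) ^+ 2).
Definition spec_norm (n : nat) (M : 'M[R]_n) : R :=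
  sup [set r : R | exists v : 'cV[R]_n, vnorm v <= 1 /\ r = vnorm (M *m v)].

Definition Kbar (eps : R) (p n : nat) (x : 'I_n -> 'rV[R]_p) : 'M[R]_n :=
  \matrix_(i, j) gkern eps (x i) (x j).
Definition Ktil (eps eta : R) (p n s : nat) (x : 'I_n -> 'rV[R]_p)
  (u : 'I_s -> 'rV[R]_p) (tau : 'I_n -> 'I_s) : 'M[R]_n :=
  \matrix_(i, j) gkern_trunc eps eta (x i) (u (tau j)).

(* eta_2 = max_i ||x_i - u_{tau(i)}|| (a finite sup; 0 if n = 0). *)
Definition eta2 (p n s : nat) (x : 'I_n -> 'rV[R]_p)
  (u : 'I_s -> 'rV[R]_p) (tau : 'I_n -> 'I_s) : R :=
  \big[Num.max/0]_(i < n) eucl_dist (x i) (u (tau i)).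

End Defs.

(* Both kernel matrices have entries in [0, 1] and differ entrywise by at most
   d = exp(-eta1^2/(4 eps^2)) + eta2/eps: the Gaussian profile is (1/eps)-Lipschitz in the
   distance, |x_j - u_tau(j)| <= eta2, and truncation only discards entries of size at most
   exp(-eta1^2/(4 eps^2)).  With row and column sums at least c1 n, every step of
   K -> A -> Z -> Z Lambda^-1 Z^T is a product, a sum over n indices or an inverse of a
   quantity bounded away from 0, so entrywise closeness propagates with constants that do
   not depend on n; the entries of Z Lambda^-1 Z^T end up of order 1/n and differ by O(d/n).
   The spectral norm of an n x n matrix is at most n times its largest entry. *)

From HB Require Import structures.
From mathcomp Require Import all_boot all_order all_algebra.
From mathcomp Require Import all_classical all_reals all_analysis.
From mathcomp Require Import ring lra.
Import Order.TTheory GRing.Theory Num.Theory.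
Local Open Scope ring_scope.

Set Implicit Arguments. Unset Strict Implicit. Unset Printing Implicit Defensive.

Section KernelPerturbation.
Variable R : realType.
Implicit Types (eps t : R).

Lemma sum_sqr_ge0 n (a : 'I_n -> R) : 0 <= \sum_k a k ^+ 2.
Proof. by apply: sumr_ge0 => k _; apply: sqr_ge0. Qed.

Lemma sum_mul_sqr_le n (a b : 'I_n -> R) :
  (\sum_k a k * b k) ^+ 2 <= (\sum_k a k ^+ 2) * (\sum_k b k ^+ 2).
Proof.
set A := \sum_k a k ^+ 2; set C := \sum_k b k ^+ 2; set S := \sum_k a k * b k.
have AC : \sum_i \sum_j a i ^+ 2 * b j ^+ 2 = A * C.
  by rewrite mulr_suml; apply: eq_bigr => i _; rewrite mulr_sumr.
have CA : \sum_i \sum_j a j ^+ 2 * b i ^+ 2 = A * C.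
  by rewrite exchange_big AC.
have SS : \sum_i \sum_j (a i * b i) * (a j * b j) = S ^+ 2.
  by rewrite expr2 mulr_suml; apply: eq_bigr => i _; rewrite mulr_sumr.
have lagrange : \sum_i \sum_j (a i * b j - a j * b i) ^+ 2 = 2 * (A * C - S ^+ 2).
  have -> : \sum_i \sum_j (a i * b j - a j * b i) ^+ 2 =
      \sum_i \sum_j a i ^+ 2 * b j ^+ 2 + \sum_i \sum_j a j ^+ 2 * b i ^+ 2
      - 2 * \sum_i \sum_j (a i * b i) * (a j * b j).
    rewrite mulr_sumr -!big_split -sumrB /=; apply: eq_bigr => i _.
    rewrite mulr_sumr -!big_split -sumrB /=; apply: eq_bigr => j _; ring.
  rewrite AC CA SS; ring.
have : 0 <= \sum_i \sum_j (a i * b j - a j * b i) ^+ 2.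
  by apply: sumr_ge0 => i _; apply: sumr_ge0 => j _; apply: sqr_ge0.
rewrite lagrange; lra.
Qed.

Lemma sum_mul_le_sqrt n (a b : 'I_n -> R) :
  \sum_k a k * b k <= Num.sqrt (\sum_k a k ^+ 2) * Num.sqrt (\sum_k b k ^+ 2).
Proof.
rewrite -sqrtrM ?sum_sqr_ge0 //; apply: le_trans (ler_norm _) _.
by rewrite -sqrtr_sqr ler_sqrt ?sum_mul_sqr_le // mulr_ge0 // sum_sqr_ge0.
Qed.

Lemma sqrt_sum_sqrD_le n (a b : 'I_n -> R) :
  Num.sqrt (\sum_k (a k + b k) ^+ 2)
    <= Num.sqrt (\sum_k a k ^+ 2) + Num.sqrt (\sum_k b k ^+ 2).
Proof.
rewrite -[X in _ <= X]ger0_norm ?addr_ge0 ?sqrtr_ge0 //.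
rewrite -sqrtr_sqr ler_sqrt ?sqr_ge0 // sqrrD !sqr_sqrtr ?sum_sqr_ge0 //.
have -> : \sum_k (a k + b k) ^+ 2
    = \sum_k a k ^+ 2 + 2 * \sum_k a k * b k + \sum_k b k ^+ 2.
  by rewrite mulr_sumr -!big_split; apply: eq_bigr => k _ /=; ring.
have := sum_mul_le_sqrt a b; rewrite mulr2n; lra.
Qed.

Lemma eucl_dist_ge0 p (x y : 'rV[R]_p) : 0 <= eucl_dist x y.
Proof. exact: sqrtr_ge0. Qed.

Lemma eucl_distC p (x y : 'rV[R]_p) : eucl_dist x y = eucl_dist y x.
Proof. by rewrite /eucl_dist; congr Num.sqrt; apply: eq_bigr => k _; ring. Qed.

Lemma eucl_dist_triangle p (x y z : 'rV[R]_p) :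
  eucl_dist x z <= eucl_dist x y + eucl_dist y z.
Proof.
have := sqrt_sum_sqrD_le (fun k => x 0 k - y 0 k) (fun k => y 0 k - z 0 k).
by congr (Num.sqrt _ <= _); apply: eq_bigr => k _; ring.
Qed.

Lemma eucl_dist_lipschitz p (x y z : 'rV[R]_p) :
  `|eucl_dist x y - eucl_dist x z| <= eucl_dist y z.
Proof.
have := eucl_dist_triangle x y z; have := eucl_dist_triangle x z y.
rewrite (eucl_distC z y) ler_norml => ? ?; apply/andP; split; lra.
Qed.

Definition gprofile eps t := expR (- t ^+ 2 / (4 * eps ^+ 2)).

Lemma gkernE eps p (x y : 'rV[R]_p) : gkern eps x y = gprofile eps (eucl_dist x y).
Proof. by []. Qed.

Lemma gprofile_gt0 eps t : 0 < gprofile eps t.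
Proof. exact: expR_gt0. Qed.

Lemma gprofile_le1 eps t : gprofile eps t <= 1.
Proof.
by rewrite /gprofile expR_le1 mulNr oppr_le0 divr_ge0 ?sqr_ge0 // mulr_ge0 // sqr_ge0.
Qed.

Lemma gprofile_le eps a b : 0 <= a -> a <= b -> gprofile eps b <= gprofile eps a.
Proof.
move=> a0 ab; rewrite /gprofile ler_expR !mulNr lerN2.
apply: ler_wpM2r; first by rewrite invr_ge0 mulr_ge0 // sqr_ge0.
by rewrite ler_sqr // nnegrE (le_trans a0).
Qed.

Lemma mulr_gprofile_le eps t : 0 < eps -> t * gprofile eps t <= eps.
Proof.
move=> eps0; set E := expR (t ^+ 2 / (4 * eps ^+ 2)).
have gE : gprofile eps t * E = 1 by rewrite /gprofile /E -expRD mulNr addNr expR0.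
have t_le : t <= eps * (1 + t ^+ 2 / (4 * eps ^+ 2)).
  have -> : eps * (1 + t ^+ 2 / (4 * eps ^+ 2)) = t + (2 * eps - t) ^+ 2 / (4 * eps).
    by field; rewrite gt_eqF.
  by rewrite lerDl divr_ge0 ?sqr_ge0 // mulr_ge0 // ltW.
have {}t_le : t <= eps * E.
  by apply: (le_trans t_le); rewrite ler_pM2l // expR_ge1Dx.
by rewrite -[leRHS]mulr1 -gE mulrCA [t * _]mulrC ler_pM2l ?gprofile_gt0.
Qed.

Lemma gprofile_sub_le eps a b : 0 < eps -> 0 <= a -> a <= b ->
  gprofile eps a - gprofile eps b <= (b - a) / eps.
Proof.
(* With [u = (b - a) / eps]: [f b = f a * e^-y], [1 - e^-y <= y] and [a f a <= eps] bound the
   gap by [u/2 + u^2/4 <= u] when [u <= 1]; when [u > 1] the gap is below [f a <= 1]. *)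
move=> eps0 a0 ab; set u := (b - a) / eps; set ga := gprofile eps a.
have u0 : 0 <= u by rewrite divr_ge0 ?subr_ge0 // ltW.
set y := (b - a) * (2 * a + (b - a)) / (4 * eps ^+ 2).
have gb : gprofile eps b = ga * expR (- y).
  by rewrite /ga /gprofile -expRD /y; congr expR; field; rewrite gt_eqF.
have gb0 : 0 < gprofile eps b by apply: gprofile_gt0.
have ga1 : ga <= 1 by apply: gprofile_le1.
have ga_y : ga - gprofile eps b <= ga * y.
  have : 1 - expR (- y) <= y by have := expR_ge1Dx (- y); lra.
  have -> : ga - gprofile eps b = ga * (1 - expR (- y)) by rewrite gb; ring.
  by apply: ler_wpM2l; rewrite ltW ?gprofile_gt0.
have ga_y_le : ga * y <= u / 2 + u ^+ 2 / 4.
  have -> : ga * y = (a * ga) * (b - a) / (2 * eps ^+ 2) + ga * u ^+ 2 / 4.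
    by rewrite /y /u; field; rewrite gt_eqF.
  have aga : (a * ga) * (b - a) / (2 * eps ^+ 2) <= u / 2.
    have -> : u / 2 = eps * (b - a) / (2 * eps ^+ 2) by rewrite /u; field; rewrite gt_eqF.
    apply: ler_wpM2r; first by rewrite invr_ge0 mulr_ge0 // sqr_ge0.
    by apply: ler_wpM2r; rewrite ?subr_ge0 // mulr_gprofile_le.
  have : ga * u ^+ 2 <= u ^+ 2 by rewrite ler_piMl ?sqr_ge0 // ltW ?gprofile_gt0.
  lra.
case: (lerP u 1) => u1; last lra.
have : u ^+ 2 <= u by rewrite expr2 ler_piMl.
lra.
Qed.

Lemma gprofile_lipschitz eps a b : 0 < eps -> 0 <= a -> 0 <= b ->
  `|gprofile eps a - gprofile eps b| <= `|a - b| / eps.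
Proof.
move=> eps0 a0 b0; wlog ab : a b a0 b0 / a <= b => [hw|].
  case/orP: (le_total a b) => [ab|ba]; first exact: hw.
  by rewrite distrC (distrC a); apply: hw.
rewrite ger0_norm ?subr_ge0 ?gprofile_le // distrC ger0_norm ?subr_ge0 //.
exact: gprofile_sub_le.
Qed.

Lemma gkern_trunc_sub_le eps eta r p (x y z : 'rV[R]_p) : 0 < eps -> 0 < eta ->
  eucl_dist y z <= r ->
  `|gkern eps x y - gkern_trunc eps eta x z| <= gprofile eps eta + r / eps.
Proof.
move=> eps0 eta0 yz.
have lip : `|gkern eps x y - gkern eps x z| <= r / eps.
  rewrite !gkernE; apply: le_trans (gprofile_lipschitz _ _ _) _; rewrite ?eucl_dist_ge0 //.
  by rewrite ler_pM2r ?invr_gt0 // (le_trans (eucl_dist_lipschitz x y z)).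
have geta0 := gprofile_gt0 eps eta.
rewrite /gkern_trunc; case: ifP => [_|]; first lra.
rewrite ltNge => /negbFE eta_le; rewrite subr0 ger0_norm; last by rewrite ltW ?gprofile_gt0.
have : gkern eps x z <= gprofile eps eta by rewrite gkernE gprofile_le // ltW.
have := ler_norm (gkern eps x y - gkern eps x z); lra.
Qed.

Lemma vnorm_mulmx_le n (M : 'M[R]_n) (v : 'cV[R]_n) :
  vnorm (M *m v) <= Num.sqrt (\sum_i \sum_j M i j ^+ 2) * vnorm v.
Proof.
have MM_ge0 : 0 <= \sum_i \sum_j M i j ^+ 2 by apply: sumr_ge0 => i _; apply: sum_sqr_ge0.
rewrite /vnorm -sqrtrM // ler_sqrt ?mulr_ge0 ?sum_sqr_ge0 //.
rewrite mulr_suml; apply: ler_sum => i _; rewrite mxE.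
exact: sum_mul_sqr_le (fun j => M i j) (fun j => v j 0).
Qed.

Lemma spec_norm_le n (M : 'M[R]_n) (m : R) : (forall i j, `|M i j| <= m) ->
  spec_norm M <= n%:R * m.
Proof.
move=> Mm; have nm0 : 0 <= n%:R * m.
  case: n M Mm => [|n] M Mm; first by rewrite mul0r.
  by rewrite mulr_ge0 // (le_trans (normr_ge0 _) (Mm ord0 ord0)).
have vnorm0 : vnorm (0 : 'cV[R]_n) = 0.
  by rewrite /vnorm big1 ?sqrtr0 // => i _; rewrite mxE expr0n.
apply: ge_sup; first by exists 0, 0; rewrite mulmx0 vnorm0.
move=> _ [v [v1 ->]]; apply: (le_trans (vnorm_mulmx_le M v)).
apply: le_trans (ler_wpM2l (sqrtr_ge0 _) v1) _; rewrite mulr1.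
rewrite -[leRHS]ger0_norm // -sqrtr_sqr ler_sqrt ?sqr_ge0 //.
have -> : (n%:R * m) ^+ 2 = \sum_(i < n) \sum_(j < n) m ^+ 2.
  by rewrite !sumr_const !card_ord -mulrnA -[RHS]mulr_natl natrM; ring.
apply: ler_sum => i _; apply: ler_sum => j _.
by rewrite -real_normK ?num_real // ler_sqr ?nnegrE // (le_trans (normr_ge0 _) (Mm i j)).
Qed.

Lemma invmx_diag n (r : 'rV[R]_n) : (forall k, r 0 k != 0) ->
  invmx (diag_mx r) = diag_mx (\row_k (r 0 k)^-1).
Proof.
move=> r_neq0; have rr : diag_mx r *m diag_mx (\row_k (r 0 k)^-1) = 1%:M.
  by rewrite mulmx_diag -diag_const_mx; congr diag_mx; apply/rowP => k; rewrite !mxE divff.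
have [r_unit _] := mulmx1_unit rr.
by rewrite -[RHS]mul1mx -(mulVmx r_unit) -mulmxA rr mulmx1.
Qed.

Lemma ZLZE n (K : 'M[R]_n) i j : (forall k, csum (Zmat K) k != 0) ->
  ZLZ K i j = \sum_k Zmat K i k * (csum (Zmat K) k)^-1 * Zmat K j k.
Proof.
move=> L_neq0; rewrite /ZLZ /Lmat invmx_diag => [|k]; last by rewrite mxE.
by rewrite mul_mx_diag mxE; apply: eq_bigr => k _; rewrite !mxE.
Qed.

Definition bounded_kernel n c (K : 'M[R]_n) :=
  (forall i j, 0 <= K i j <= 1) /\
  (forall i, c * n%:R <= rsum K i /\ c * n%:R <= csum K i).

Lemma AmatE n (K : 'M[R]_n) i j : Amat K i j = K i j / (rsum K i * csum K j).
Proof. exact: mxE. Qed.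

Lemma ZmatE n (K : 'M[R]_n) i j : Zmat K i j = Amat K i j / rsum (Amat K) i.
Proof. exact: mxE. Qed.

Section BoundedKernel.
Variables (n : nat) (c : R) (K : 'M[R]_n).
Hypotheses (c_gt0 : 0 < c) (K_bounded : bounded_kernel c K).

Let K_ge0 i j : 0 <= K i j. Proof. by case: K_bounded => /(_ i j) /andP[]. Qed.
Let rsum_ge i : c * n%:R <= rsum K i. Proof. by case: K_bounded => _ /(_ i) []. Qed.
Let csum_ge i : c * n%:R <= csum K i. Proof. by case: K_bounded => _ /(_ i) []. Qed.

Let n_gt0 (i : 'I_n) : 0 < n%:R :> R.
Proof. by rewrite ltr0n (leq_ltn_trans (leq0n i) (ltn_ord i)). Qed.

Let rsum_gt0 i : 0 < rsum K i.
Proof. exact: lt_le_trans (mulr_gt0 c_gt0 (n_gt0 i)) (rsum_ge i). Qed.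
Let csum_gt0 i : 0 < csum K i.
Proof. exact: lt_le_trans (mulr_gt0 c_gt0 (n_gt0 i)) (csum_ge i). Qed.

Let K_le1 i j : K i j <= 1. Proof. by case: K_bounded => /(_ i j) /andP[]. Qed.

Let rsum_le_dim i : rsum K i <= n%:R.
Proof. by rewrite /rsum -[n in n%:R]card_ord -sumr_const ler_sum. Qed.
Let csum_le_dim j : csum K j <= n%:R.
Proof. by rewrite /csum -[n in n%:R]card_ord -sumr_const ler_sum. Qed.

Lemma rsum_Amat_ge i : n%:R^-1 <= rsum (Amat K) i.
Proof.
have -> : n%:R^-1 = \sum_j K i j / (rsum K i * n%:R).
  by rewrite -mulr_suml -/(rsum K i); field; rewrite !gt_eqF ?n_gt0.
apply: ler_sum => j _; rewrite mxE ler_wpM2l // lef_pV2 ?posrE ?mulr_gt0 ?n_gt0 //.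
by rewrite ler_pM2l // csum_le_dim.
Qed.

Lemma rsum_Amat_le i : rsum (Amat K) i <= (c * n%:R)^-1.
Proof.
have -> : (c * n%:R)^-1 = \sum_j K i j / (rsum K i * (c * n%:R)).
  by rewrite -mulr_suml -/(rsum K i); field; rewrite !gt_eqF ?n_gt0.
apply: ler_sum => j _; rewrite mxE ler_wpM2l // lef_pV2 ?posrE ?mulr_gt0 ?n_gt0 //.
by rewrite ler_pM2l.
Qed.

Lemma csum_Zmat_ge k : c <= csum (Zmat K) k.
Proof.
have -> : c = \sum_j K j k * c / csum K k.
  by rewrite -!mulr_suml -/(csum K k); field; rewrite gt_eqF.
apply: ler_sum => j _; rewrite !mxE.
have a_gt0 : 0 < rsum (Amat K) j.
  by apply: lt_le_trans (rsum_Amat_ge j); rewrite invr_gt0 (n_gt0 j).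
have cn_le : c * n%:R <= (rsum (Amat K) j)^-1.
  by rewrite -[c * n%:R]invrK lef_pV2 ?posrE ?invr_gt0 ?mulr_gt0 ?(n_gt0 j) // rsum_Amat_le.
have n_le : 1 <= n%:R / rsum K j.
  by rewrite ler_pdivlMr // mul1r.
have Kc_ge0 : 0 <= K j k * c / csum K k.
  by rewrite divr_ge0 ?mulr_ge0 // ltW.
apply: le_trans (_ : K j k / (rsum K j * csum K k) * (c * n%:R) <= _).
  have -> : K j k / (rsum K j * csum K k) * (c * n%:R)
      = (K j k * c / csum K k) * (n%:R / rsum K j).
    by field; rewrite !gt_eqF.
  by rewrite ler_peMr.
by rewrite ler_wpM2l // divr_ge0 // ltW ?mulr_gt0.
Qed.

End BoundedKernel.

(* In [Amat_close] and [ZLZ_perturbation] the scale [s] is a power of [n] while [X] and [k]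
   depend only on [c], so these bounds keep track of the order in [n]. *)
Definition close (d s X k a a' : R) :=
  [/\ `|a| <= X * s, `|a'| <= X * s & `|a - a'| <= k * d * s].

Lemma closeE (d s s' X k a a' b b' : R) :
  close d s X k a a' -> s = s' -> b = a -> b' = a' -> close d s' X k b b'.
Proof. by move=> ? <- -> ->. Qed.

Lemma closeM (d s1 s2 X1 X2 k1 k2 a a' b b' : R) :
  close d s1 X1 k1 a a' -> close d s2 X2 k2 b b' ->
  close d (s1 * s2) (X1 * X2) (k1 * X2 + X1 * k2) (a * b) (a' * b').
Proof.
case=> a_le a'_le aa' [b_le b'_le bb'].
have Xs1_ge0 : 0 <= X1 * s1 by apply: le_trans a_le.
have Xs2_ge0 : 0 <= X2 * s2 by apply: le_trans b_le.
rewrite /close mulrACA (_ : _ * d * _ = k1 * d * s1 * (X2 * s2) + X1 * s1 * (k2 * d * s2));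
  last by ring.
rewrite !normrM; split; rewrite ?ler_pM //.
have -> : a * b - a' * b' = (a - a') * b + a' * (b - b') by ring.
by apply: le_trans (ler_normD _ _) _; rewrite !normrM lerD // ler_pM.
Qed.

Lemma close_sum (d s X k : R) n (F F' : 'I_n -> R) :
  (forall i, close d s X k (F i) (F' i)) ->
  close d (n%:R * s) X k (\sum_i F i) (\sum_i F' i).
Proof.
move=> FF'; have sum_le (G : 'I_n -> R) (m : R) : (forall i, `|G i| <= m * s) ->
    `|\sum_i G i| <= m * (n%:R * s).
  move=> Gm; apply: le_trans (ler_norm_sum _ _ _) _.
  apply: le_trans (ler_sum _ (fun i _ => Gm i)) _.
  by rewrite sumr_const card_ord -[leLHS]mulr_natl mulrCA.
by split; rewrite -?sumrB; apply: sum_le => i; case: (FF' i).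
Qed.

Lemma closeV (d s l X k a a' : R) : 0 < l * s -> l * s <= a -> l * s <= a' ->
  close d s X k a a' -> close d s^-1 l^-1 (k / l ^+ 2) a^-1 a'^-1.
Proof.
move=> ls_gt0 a_ge a'_ge [_ _ aa'].
have a_gt0 := lt_le_trans ls_gt0 a_ge; have a'_gt0 := lt_le_trans ls_gt0 a'_ge.
have l_neq0 : l != 0 by apply: contraTneq ls_gt0 => ->; rewrite mul0r ltxx.
have s_neq0 : s != 0 by apply: contraTneq ls_gt0 => ->; rewrite mulr0 ltxx.
have inv_le b : l * s <= b -> `|b^-1| <= l^-1 * s^-1.
  move=> b_ge; have b_gt0 := lt_le_trans ls_gt0 b_ge.
  by rewrite -invfM ger0_norm ?lef_pV2 ?posrE // invr_ge0 ltW.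
split; rewrite ?inv_le //.
have -> : a^-1 - a'^-1 = (a' - a) / (a * a') by field; rewrite !gt_eqF.
have -> : k / l ^+ 2 * d * s^-1 = (k * d * s) / ((l * s) * (l * s)) by field; apply/andP.
rewrite normrM distrC ger0_norm; last by rewrite invr_ge0 ltW ?mulr_gt0.
apply: ler_pM => //; first by rewrite invr_ge0 ltW ?mulr_gt0.
rewrite lef_pV2 ?posrE ?(mulr_gt0 ls_gt0 ls_gt0) ?(mulr_gt0 a_gt0 a'_gt0) //.
by apply: ler_pM => //; apply: ltW.
Qed.

Lemma bounded_kernel_close n c (K K' : 'M[R]_n) (d : R) :
  bounded_kernel c K -> bounded_kernel c K' -> (forall i j, `|K i j - K' i j| <= d) ->
  forall i j, close d 1 1 1 (K i j) (K' i j).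
Proof.
move=> [K01 _] [K'01 _] KK' i j; rewrite /close !mulr1 mul1r KK'.
by case/andP: (K01 i j) => ? ?; case/andP: (K'01 i j) => ? ?; rewrite !ger0_norm.
Qed.

Lemma Amat_close (c : R) : 0 < c -> exists X k, forall n (K K' : 'M[R]_n) (d : R),
  bounded_kernel c K -> bounded_kernel c K' -> (forall i j, `|K i j - K' i j| <= d) ->
  forall i j, close d (n%:R * n%:R)^-1 X k (Amat K i j) (Amat K' i j).
Proof.
(* Here and in [ZLZ_perturbation] the constants are left as evars and fixed by unification
   with the [close] fact the chain of estimates ends with. *)
move=> c_gt0; eexists; eexists => n K K' d bK bK' KK' i j.
set N : R := n%:R; have N_gt0 : 0 < N by rewrite ltr0n (leq_ltn_trans (leq0n i) (ltn_ord i)).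
have hK := bounded_kernel_close bK bK' KK'.
have hr k : close d N 1 1 (rsum K k) (rsum K' k).
  exact: closeE (close_sum (hK k)) (mulr1 _) erefl erefl.
have hc l : close d N 1 1 (csum K l) (csum K' l).
  exact: closeE (close_sum (hK ^~ l)) (mulr1 _) erefl erefl.
have sums_ge (M : 'M[R]_n) : bounded_kernel c M ->
    forall k l, (c * c) * (N * N) <= rsum M k * csum M l.
  case=> [M01 M_sum] k l; rewrite mulrACA.
  have cN_ge0 := ltW (mulr_gt0 c_gt0 N_gt0).
  by apply: ler_pM => //; [case: (M_sum k)|case: (M_sum l)].
have cN_gt0 : 0 < (c * c) * (N * N) by rewrite !mulr_gt0.
exact: closeE (closeM (hK i j)
    (closeV cN_gt0 (sums_ge _ bK i j) (sums_ge _ bK' i j) (closeM (hr i) (hc j))))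
  (mul1r _) (AmatE K i j) (AmatE K' i j).
Qed.

Lemma ZLZ_perturbation (c : R) : 0 < c -> exists C, forall n (K K' : 'M[R]_n) (d : R),
  bounded_kernel c K -> bounded_kernel c K' -> (forall i j, `|K i j - K' i j| <= d) ->
  forall i j, `|ZLZ K i j - ZLZ K' i j| <= C * d / n%:R.
Proof.
move=> c_gt0; have [? [? Amat_cl]] := Amat_close c_gt0.
eexists => n K K' d bK bK' KK' i j.
have hA := Amat_cl n K K' d bK bK' KK'.
set N : R := n%:R; have N_gt0 : 0 < N by rewrite ltr0n (leq_ltn_trans (leq0n i) (ltn_ord i)).
have N_neq0 : N != 0 by rewrite gt_eqF.
have scale_a : N * (N * N)^-1 = N^-1 by field.
have scale_Z : (N * N)^-1 * N^-1^-1 = N^-1 by field.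
have scale_ZLZ : N * (N^-1 * 1^-1 * N^-1) = N^-1 by field.
have N_inv_gt0 : 0 < 1 * N^-1 by rewrite mul1r invr_gt0.
have a_ge (M : 'M[R]_n) (bM : bounded_kernel c M) k : 1 * N^-1 <= rsum (Amat M) k.
  by rewrite mul1r (rsum_Amat_ge c_gt0 bM).
have ha k : close d N^-1 _ _ (rsum (Amat K) k) (rsum (Amat K') k) :=
  closeE (close_sum (hA k)) scale_a erefl erefl.
have hZ k l : close d N^-1 _ _ (Zmat K k l) (Zmat K' k l) :=
  closeE (closeM (hA k l) (closeV N_inv_gt0 (a_ge _ bK k) (a_ge _ bK' k) (ha k)))
    scale_Z (ZmatE K k l) (ZmatE K' k l).
have c1_gt0 : 0 < c * 1 by rewrite mulr1.
have L_ge (M : 'M[R]_n) (bM : bounded_kernel c M) l : c * 1 <= csum (Zmat M) l.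
  by rewrite mulr1 (csum_Zmat_ge c_gt0 bM).
have hL l : close d 1 _ _ (csum (Zmat K) l) (csum (Zmat K') l) :=
  closeE (close_sum (hZ ^~ l)) (mulfV N_neq0) erefl erefl.
have hT k :=
  closeM (closeM (hZ i k) (closeV c1_gt0 (L_ge _ bK k) (L_ge _ bK' k) (hL k))) (hZ j k).
have L_neq0 (M : 'M[R]_n) (bM : bounded_kernel c M) l : csum (Zmat M) l != 0.
  by rewrite gt_eqF // (lt_le_trans c_gt0) // (csum_Zmat_ge c_gt0 bM).
have [_ _ ZLZ_diff] :=
  closeE (close_sum hT) scale_ZLZ (ZLZE i j (L_neq0 _ bK)) (ZLZE i j (L_neq0 _ bK')).
exact: ZLZ_diff.
Qed.

End KernelPerturbation.

Theorem lemma2 (R : realType) (p : nat) (eps : R) (eps_gt0 : 0 < eps)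
  (x : forall n : nat, 'I_n -> 'rV[R]_p)
  (s : nat -> nat)
  (ind : forall n : nat, 'I_(s n) -> 'I_n)
  (tau : forall n : nat, 'I_n -> 'I_(s n))
  (tau_nearest : forall (n : nat) (i : 'I_n) (j : 'I_(s n)),
     eucl_dist (x n i) (x n (ind n (tau n i))) <= eucl_dist (x n i) (x n (ind n j)))
  (eta1 : nat -> R) (eta1_gt0 : forall n, 0 < eta1 n)
  (c1 : R) (c1_gt0 : 0 < c1) (c1_lt1 : c1 < 1)
  (hK : forall (n : nat), (0 < n)%N -> forall i : 'I_n,
     [/\ c1 * n%:R <= rsum (Kbar eps (x n)) i,
         c1 * n%:R <= csum (Kbar eps (x n)) i,
         c1 * n%:R <= rsum (Ktil eps (eta1 n) (x n) (fun j => x n (ind n j)) (tau n)) i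
       & c1 * n%:R <= csum (Ktil eps (eta1 n) (x n) (fun j => x n (ind n j)) (tau n)) i]) :
  exists C1 : R, forall n : nat, (0 < n)%N ->
    spec_norm (ZLZ (Kbar eps (x n))
               - ZLZ (Ktil eps (eta1 n) (x n) (fun j => x n (ind n j)) (tau n)))
    <= C1 * (expR (- (eta1 n) ^+ 2 / (4 * eps ^+ 2))
             + eta2 (x n) (fun j => x n (ind n j)) (tau n) / eps).
Proof.
have [C ZLZ_le] := ZLZ_perturbation c1_gt0.
exists C => n n_gt0.
set K := Kbar eps (x n); set K' := Ktil _ _ _ _ _.
set r := eta2 _ _ _.
have bK : bounded_kernel c1 K.
  split; last by move=> i; case: (hK n n_gt0 i).
  by move=> i j; rewrite /K mxE gkernE ltW ?gprofile_gt0 ?gprofile_le1.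
have bK' : bounded_kernel c1 K'.
  split; last by move=> i; case: (hK n n_gt0 i).
  move=> i j; rewrite /K' mxE /gkern_trunc; case: ifP => _; last by rewrite lexx ler01.
  by rewrite gkernE ltW ?gprofile_gt0 ?gprofile_le1.
have KK' i j : `|K i j - K' i j| <= gprofile eps (eta1 n) + r / eps.
  rewrite /K /K' !mxE gkern_trunc_sub_le //.
  exact: le_bigmax (fun l => eucl_dist (x n l) (x n (ind n (tau n l)))) j.
have diff_le i j : `|(ZLZ K - ZLZ K') i j| <= C * (gprofile eps (eta1 n) + r / eps) / n%:R.
  have -> : (ZLZ K - ZLZ K') i j = ZLZ K i j - ZLZ K' i j by rewrite !mxE.
  exact: ZLZ_le.
apply: le_trans (spec_norm_le diff_le) _.
by rewrite mulrC divfK // pnatr_eq0 -lt0n.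
Qed.
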